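(* For all integers $n,k$ with $1\le k\le n-1$, $\Gamma_{\times k,t}(K_n\times K_2)=2k+2$.
   Context: For an integer $k\ge1$ and a graph $G$ with $\delta(G)\ge k$, a set $S\subseteq V(G)$ is a $k$-tuple total dominating set ($k$TDS) if $|N_G(x)\cap S|\ge k$ for every $x\in V(G)$, and $\Gamma_{\times k,t}(G)$ is the maximum cardinality of a minimal (with respect to inclusion) $k$TDS of $G$. The cross (direct) product $G\times H$ has vertex set $V(G)\times V(H)$, with $(g_1,h_1)\sim(g_2,h_2)$ iff $g_1g_2\in E(G)$ and $h_1h_2\in E(H)$. *)

From mathcomp Require Import all_boot.
Set Implicit Arguments. Unset Strict Implicit. Unset Printing Implicit Defensive.

(* A simple graph on a finite type T is given by an adjacency relation e
   (assumed symmetric and irreflexive where relevant). *)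

Definition nbhd (T : finType) (e : rel T) (x : T) : {set T} := [set y | e x y].

Definition is_kTDS (T : finType) (e : rel T) (k : nat) (S : {set T}) : bool :=
  [forall x, k <= #|nbhd e x :&: S|].

Definition is_minimal_kTDS (T : finType) (e : rel T) (k : nat) (S : {set T}) : bool :=
  is_kTDS e k S && [forall S' : {set T}, (S' \proper S) ==> ~~ is_kTDS e k S'].

Definition upper_ktuple_total_dom (T : finType) (e : rel T) (k : nat) : nat :=
  \max_(S : {set T} | is_minimal_kTDS e k S) #|S|.

Definition complete_graph (n : nat) : rel 'I_n := fun a b => a != b.

Definition cross_prod (T1 T2 : finType) (e1 : rel T1) (e2 : rel T2) : rel (T1 * T2) :=
  fun u v => e1 u.1 v.1 && e2 u.2 v.2.

(* A vertex (a, b) of G x K_2 sees exactly the copy of N_G(a) in the other layer, so a set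
   S of vertices is a (minimal) k-tuple total dominating set of G x K_2 iff both of its
   layers are (minimal) k-tuple total dominating sets of G; hence the upper parameter of
   G x K_2 is twice that of G.  In K_n a set A is a kTDS iff |A| > k (every vertex
   sees all of A but itself), so the minimal ones have exactly k + 1 elements, which
   gives 2(k + 1). *)

From mathcomp Require Import all_boot.
From mathcomp Require Import zify.
Set Implicit Arguments. Unset Strict Implicit. Unset Printing Implicit Defensive.

Lemma card_ord_lt (m n : nat) : m <= n -> #|[set i : 'I_n | i < m]| = m.
Proof. by move=> le_mn; rewrite -sum1dep_card (big_ord_narrow le_mn) sum1_card card_ord. Qed.

Section Slices.
Variables T1 T2 : finType.
Implicit Types (S : {set T1 * T2}) (A : {set T1}) (b : T2).

Definition slice S b : {set T1} := [set a | (a, b) \in S].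

Definition restrict_slice S b A : {set T1 * T2} :=
  [set x in S | (x.2 == b) ==> (x.1 \in A)].

Lemma card_slices S : #|S| = \sum_b #|slice S b|.
Proof.
have sliceE b : #|slice S b| = \sum_a ((a, b) \in S).
  by rewrite -sum1_card big_mkcond; apply: eq_bigr => a _; rewrite inE; case: ifP.
rewrite (eq_bigr _ (fun b _ => sliceE b)) exchange_big pair_bigA /=.
by rewrite -sum1_card big_mkcond; apply: eq_bigr => -[a b] _; case: ifP.
Qed.

Lemma subset_slices S' S : (S' \subset S) = [forall b, slice S' b \subset slice S b].
Proof.
apply/subsetP/forallP => [sub b | sub [a b] inS'].
  by apply/subsetP => a; rewrite !inE => /sub.
by have /subsetP/(_ a) := sub b; rewrite !inE; apply.
Qed.

Lemma slice_setXT A b : slice (setX A setT) b = A.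
Proof. by apply/setP => a; rewrite !inE andbT. Qed.

Lemma slice_restrict S b A c :
  slice (restrict_slice S b A) c = if c == b then slice S c :&: A else slice S c.
Proof.
apply/setP => a; case: eqP => [->|/eqP/negbTE neq_cb];
  by rewrite !inE /= ?eqxx ?neq_cb ?andbT.
Qed.

Lemma restrict_slice_proper S b A :
  A \proper slice S b -> restrict_slice S b A \proper S.
Proof.
rewrite !properE => /andP[_ notsubA]; apply/andP; split.
  by apply/subsetP => x; rewrite inE => /andP[].
rewrite subset_slices; apply: contra notsubA => /forallP/(_ b).
by rewrite slice_restrict eqxx subsetI => /andP[].
Qed.

End Slices.

Lemma ord2_rev_neq (b : 'I_2) : rev_ord b != b.
Proof. by case: b => [[|[|?]] ?]. Qed.

Lemma ord2_neq_rev (b c : 'I_2) : c != b -> c = rev_ord b.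
Proof. by case: b c => [[|[|?]] ?] [[|[|?]] ?] // _; apply: val_inj. Qed.

Section CrossK2.
Variables (T : finType) (e : rel T) (k : nat).
Local Notation eK2 := (cross_prod e (@complete_graph 2)).

Lemma nbhd_cross_K2 (S : {set T * 'I_2}) a b :
  nbhd eK2 (a, b) :&: S = setX (nbhd e a :&: slice S (rev_ord b)) [set rev_ord b].
Proof.
apply/setP => -[x c]; rewrite !inE /cross_prod /complete_graph /=.
case: (eqVneq c (rev_ord b)) => [->|neq_c]; first by rewrite (eq_sym b) ord2_rev_neq !andbT.
have -> : (b != c) = false by apply: contraNF neq_c; rewrite eq_sym => /ord2_neq_rev ->.
by rewrite !andbF.
Qed.

Lemma kTDS_cross_K2 (S : {set T * 'I_2}) :
  is_kTDS eK2 k S = [forall b, is_kTDS e k (slice S b)].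
Proof.
have cardN a b : #|nbhd eK2 (a, b) :&: S| = #|nbhd e a :&: slice S (rev_ord b)|.
  by rewrite nbhd_cross_K2 cardsX cards1 muln1.
apply/forallP/forallP => [dom b | dom [a b]]; last first.
  by rewrite cardN; apply: (forallP (dom (rev_ord b))).
by apply/forallP => a; have := dom (a, rev_ord b); rewrite cardN rev_ordK.
Qed.

Lemma minimal_slice_cross_K2 (S : {set T * 'I_2}) b :
  is_minimal_kTDS eK2 k S -> is_minimal_kTDS e k (slice S b).
Proof.
case/andP=> domS /forallP minS; rewrite /is_minimal_kTDS.
rewrite kTDS_cross_K2 in domS; rewrite (forallP domS b) /=.
apply/forallP => A; apply/implyP => properA; apply/negP => domA.
have /implyP/(_ (restrict_slice_proper properA))/negP := minS (restrict_slice S b A); apply.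
rewrite kTDS_cross_K2; apply/forallP => c.
rewrite slice_restrict; case: eqP => [->|_]; last exact: (forallP domS).
by rewrite (setIidPr (proper_sub properA)).
Qed.

Lemma minimal_cross_K2 (S : {set T * 'I_2}) :
  is_minimal_kTDS eK2 k S = [forall b, is_minimal_kTDS e k (slice S b)].
Proof.
apply/idP/forallP => [minS b | minSl]; first exact: minimal_slice_cross_K2.
apply/andP; split.
  by rewrite kTDS_cross_K2; apply/forallP => b; case/andP: (minSl b).
apply/forallP => S'; apply/implyP; rewrite properE !subset_slices negb_forall.
case/andP=> /forallP subS' /existsP[b notsub].
rewrite kTDS_cross_K2 negb_forall; apply/existsP; exists b.
case/andP: (minSl b) => _ /forallP/(_ (slice S' b))/implyP; apply.
by rewrite properE subS' notsub.
Qed.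

Lemma upper_ktuple_total_dom_cross_K2 :
  upper_ktuple_total_dom eK2 k = 2 * upper_ktuple_total_dom e k.
Proof.
apply/eqP; rewrite eqn_leq; apply/andP; split.
  apply/bigmax_leqP => S minS; rewrite card_slices.
  rewrite -[X in _ <= X * _](card_ord 2) -sum_nat_const; apply: leq_sum => b _.
  by apply: leq_bigmax_cond; exact: minimal_slice_cross_K2.
case: (pickP (is_minimal_kTDS e k)) => [A minA | none]; last first.
  by rewrite /upper_ktuple_total_dom [X in 2 * X]big_pred0.
rewrite /upper_ktuple_total_dom [X in 2 * X](bigmax_eq_arg _ minA).
case: (arg_maxnP (fun S : {set T} => #|S|) minA) => A0 minA0 _.
have minX : is_minimal_kTDS eK2 k (setX A0 setT).
  by rewrite minimal_cross_K2; apply/forallP => b; rewrite slice_setXT.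
by rewrite (leq_trans _ (leq_bigmax_cond _ minX)) // cardsX cardsT card_ord mulnC.
Qed.

End CrossK2.

Section CompleteGraph.
Variables (n k : nat).
Hypothesis k_gt0 : 0 < k.
Local Notation Kn := (@complete_graph n).

Lemma nbhd_complete (a : 'I_n) (A : {set 'I_n}) : nbhd Kn a :&: A = A :\ a.
Proof. by apply/setP => x; rewrite !inE /complete_graph eq_sym andbC. Qed.

Lemma kTDS_complete (A : {set 'I_n}) : 0 < n -> is_kTDS Kn k A = (k < #|A|).
Proof.
move=> n_gt0; apply/forallP/idP => [dom | ltkA a]; last first.
  rewrite nbhd_complete; move: ltkA; rewrite (cardsD1 a A).
  by case: (a \in A); [rewrite add1n ltnS | rewrite add0n => /ltnW].
have [A0 | [a aA]] := set_0Vmem A.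
  by have := dom (Ordinal n_gt0); rewrite nbhd_complete A0 set0D cards0 leqNgt k_gt0.
by have := dom a; rewrite nbhd_complete (cardsD1 a A) aA.
Qed.

Lemma minimal_kTDS_complete (A : {set 'I_n}) : 0 < n ->
  is_minimal_kTDS Kn k A = (#|A| == k.+1).
Proof.
move=> n_gt0; rewrite /is_minimal_kTDS kTDS_complete //.
apply/andP/eqP => [[ltkA /forallP minA] | cardA]; last first.
  split; first by rewrite cardA.
  apply/forallP => A'; apply/implyP => /proper_card.
  by rewrite kTDS_complete // cardA ltnS -leqNgt.
apply/eqP; rewrite eqn_leq ltkA andbT leqNgt; apply/negP => bigA.
have [a aA] : exists a, a \in A by apply/card_gt0P; lia.
have /implyP := minA (A :\ a); rewrite properD1 // kTDS_complete // => /(_ isT)/negP.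
by apply; rewrite (cardsD1 a A) aA in bigA.
Qed.

Lemma upper_ktuple_total_dom_complete : k < n -> upper_ktuple_total_dom Kn k = k.+1.
Proof.
move=> ltkn; have n_gt0 : 0 < n by lia.
apply/eqP; rewrite eqn_leq; apply/andP; split.
  by apply/bigmax_leqP => A; rewrite minimal_kTDS_complete // => /eqP ->.
have minA : is_minimal_kTDS Kn k [set i : 'I_n | i < k.+1].
  by rewrite minimal_kTDS_complete // card_ord_lt.
by rewrite -{1}(card_ord_lt ltkn) (leq_bigmax_cond _ minA).
Qed.

End CompleteGraph.

Theorem mainTheorem15 (n k : nat) (hk1 : 1 <= k) (hkn : k <= n - 1) :
  upper_ktuple_total_dom (cross_prod (@complete_graph n) (@complete_graph 2)) k
  = 2 * k + 2.
Proof.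
have ltkn : k < n by lia.
by rewrite upper_ktuple_total_dom_cross_K2 upper_ktuple_total_dom_complete // mulnSr.
Qed.
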